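(* Assume the setting of the context and suppose Assumption (A5) holds. Then for any compact interval $I\subset(0,\infty)$, \[\limsup_{n\rightarrow \infty}\sup_{t\in I}\alpha(n)^{-\kappa}h_{G^n}^{-1}(\gamma(n)t)<\infty.\]
   Context: Let $(E,d_E)$ be a metric space and $F\subseteq E$ such that $F\cap\overline{B}_E(x,r)$ is compact for all $x\in E$, $r>0$ ($\overline{B}_E$, $B_E$ closed and open balls in $E$). Let $d_F:=d_E|_{F\times F}$, $\rho\in F$, and $\nu$ a Radon measure of full support on $(F,d_F)$ (extended to $E$ by $\nu(A):=\nu(A\cap F)$). For a locally finite connected graph $G$ with at least two vertices and distinguished vertex $\rho(G)$: $d_G$ is the shortest-path metric, $B_G(x,r)$ the open $d_G$-ball; $\mu^G$ a symmetric weight with $\mu^G_{xy}>0$ iff $\{x,y\}$ is an edge; $\mu^G_x:=\sum_y\mu^G_{xy}$; $\nu^G(A):=\sum_{x\in A}\mu^G_x$; $P_G(x,y)=\mu^G_{xy}/\mu^G_x$; generator $\mathcal{L}_Gf(x)=\sum_yP_G(x,y)(f(y)-f(x))$; $(f,g)_G:=\sum_xf(x)g(x)\nu^G(\{x\})$; $\mathcal{E}_G(f,g):=-(\mathcal{L}_Gf,g)_G$ on $\mathcal{F}_G:=\{f:\mathcal{E}_G(f,f)<\infty\}$; resistance metric $R_G(x,y):=\sup\{|f(x)-f(y)|^2/\mathcal{E}_G(f,f):f\in\mathcal{F}_G,\mathcal{E}_G(f,f)>0\}$; $V_G(r):=\nu^G(\{x:R_G(\rho(G),x)\le r\})$, $h_G(r):=rV_G(r)$,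 $h_G^{-1}(m):=\sup\{r:h_G(r)\le m\}$. $(G^n)_{n\ge1}$ are such graphs with $V(G^n)\subseteq E$, $\rho(G^n)=\rho$; $\nu^n:=\nu^{G^n}$. $(\alpha(n)),(\beta(n)),(\gamma(n))$ are non-negative sequences diverging to $\infty$. Assumption (A5): (i) there is $c>0$ with $d_{G^n}(x,y)\ge c\alpha(n)d_E(x,y)$ for all $x,y\in V(G^n)$, $n\ge1$, and a non-negative $\tilde\alpha(n)=o(\alpha(n))$ such that for each $r>0$ there are $c'<\infty$, $n_0$ with $d_{G^n}(x,y)\le c'\alpha(n)d_E(x,y)+\tilde\alpha(n)$ for all $x,y\in V(G^n)\cap B_E(\rho,r)$, $n\ge n_0$; (ii) for every $x\in F$, $r>0$, $\lim_n\beta(n)^{-1}\nu^n(B_E(x,r))=\nu(B_E(x,r))$; (iii) for some $\kappa\in(0,\infty)$ there exist constants $c_1,c_2,c_3\in(0,\infty)$ and an integer $n_0$ such that $R_{G^n}(x,y)\le c_1d_{G^n}(x,y)^\kappa$ for all $x,y\in V(G^n)$, and $c_2\gamma(n)\le\alpha(n)^\kappa\beta(n)\le c_3\gamma(n)$, for all $n\ge n_0$. *)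

From HB Require Import structures.
From mathcomp Require Import all_boot all_order all_algebra.
From mathcomp Require Import all_classical all_reals all_analysis.
Set Implicit Arguments. Unset Strict Implicit. Unset Printing Implicit Defensive.
Import Order.TTheory GRing.Theory Num.Theory.
Local Open Scope classical_set_scope.
Local Open Scope ring_scope.

Section Defs.
Variables (R : realType) (E : choiceType).

Definition is_metric (d : E -> E -> R) : Prop :=
  [/\ forall x y, d x y = 0 <-> x = y,
      forall x y, d x y = d y x &
      forall x y z, d x z <= d x y + d y z].

Definition dball (d : E -> E -> R) (x : E) (r : R) : set E := [set y | d x y < r].
Definition dcball (d : E -> E -> R) (x : E) (r : R) : set E := [set y | d x y <= r].

Definition dopen (d : E -> E -> R) : set (set E) :=
  [set A | forall x, A x -> exists2 r, 0 < r & dball d x r `<=` A].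

Definition dcompact (d : E -> E -> R) (K : set E) : Prop :=
  forall (I : Type) (U : I -> set E), (forall i, dopen d (U i)) ->
    K `<=` \bigcup_(i in [set: I]) U i ->
    exists2 J : set I, finite_set J & K `<=` \bigcup_(i in J) U i.

(* {x,y} is an edge iff 0 < mu x y *)
Definition connects (mu : E -> E -> R) (k : nat) (x y : E) : Prop :=
  exists s : nat -> E, [/\ s 0%N = x, s k = y &
     forall i, (i < k)%N -> 0 < mu (s i) (s i.+1)].

Definition wgraph (V : set E) (mu : E -> E -> R) : Prop :=
  (exists x y, [/\ V x, V y & x <> y]) /\
  [/\ (forall x y, mu x y = mu y x),
      (forall x y, 0 <= mu x y),
      (forall x y, 0 < mu x y -> V x /\ V y /\ x <> y),
      (forall x, V x -> finite_set [set y | 0 < mu x y])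
    & (forall x y, V x -> V y -> exists k, connects mu k x y)].

Definition gdist (mu : E -> E -> R) (x y : E) : R :=
  inf [set (k%:R : R) | k in [set k | connects mu k x y]].

Definition gmeas (V : set E) (mu : E -> E -> R) (A : set E) : \bar R :=
  (\esum_(x in A `&` V) \esum_(y in V) (mu x y)%:E)%E.

Definition energy (V : set E) (mu : E -> E -> R) (f : E -> R) : \bar R :=
  ((2^-1)%:E * \esum_(p in [set p : E * E | V p.1 /\ V p.2])
       (mu p.1 p.2 * (f p.1 - f p.2) ^+ 2)%:E)%E.

Definition resist (V : set E) (mu : E -> E -> R) (x y : E) : \bar R :=
  ereal_sup [set ((f x - f y) ^+ 2 / fine (energy V mu f))%:E |
               f in [set f : E -> R | (0 < energy V mu f < +oo)%E]].

Definition rvol (V : set E) (mu : E -> E -> R) (rho : E) (r : R) : \bar R :=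
  gmeas V mu [set x | V x /\ (resist V mu rho x <= r%:E)%E].

Definition hfun (V : set E) (mu : E -> E -> R) (rho : E) (r : R) : \bar R :=
  (r%:E * rvol V mu rho r)%E.

Definition hinv (V : set E) (mu : E -> E -> R) (rho : E) (m : R) : \bar R :=
  ereal_sup [set r%:E | r in [set r : R | 0 <= r /\ (hfun V mu rho r <= m%:E)%E]].

End Defs.

From HB Require Import structures.
From mathcomp Require Import all_boot all_order all_algebra.
From mathcomp Require Import all_classical all_reals all_analysis.
From mathcomp Require Import ring lra.
Set Implicit Arguments. Unset Strict Implicit. Unset Printing Implicit Defensive.
Import Order.TTheory GRing.Theory Num.Theory.
Local Open Scope classical_set_scope.
Local Open Scope ring_scope.

(* By (A5)(i) every vertex of G^n in the d-ball B(rho, 1) lies within graph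
   distance (|c'| + 1) alpha(n) of rho, hence by (A5)(iii) within resistance
   K alpha(n)^kappa, K := c1 (|c'| + 1)^kappa; by (A5)(ii) and full support that
   ball carries nu^n-mass at least eps beta(n) for large n.  So
   V_{G^n}(r) >= eps beta(n) once r > K alpha(n)^kappa, and since
   gamma(n) <= alpha(n)^kappa beta(n) / c2, h_{G^n}(r) > gamma(n) t for t <= b as
   soon as r > (K + b / (c2 eps)) alpha(n)^kappa.  Hence
   alpha(n)^-kappa h^-1(gamma(n) t) <= K + b / (c2 eps) for all large n. *)

Section ExtendedReals.
Variable R : realType.

Lemma le_esum_subset (T : choiceType) (A B : set T) (a : T -> \bar R) :
  A `<=` B -> (\esum_(i in A) a i <= \esum_(i in B) a i)%E.
Proof.
move=> AB; apply: ge_ereal_sup => _ [X [finX XA] <-].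
by apply: esum_ge; exists X => //; split => //; exact: subset_trans AB.
Qed.

Lemma cvge_gt0_near (T : Type) (F : set_system T) {FF : Filter F}
    (f : T -> \bar R) (l : \bar R) :
  (0 < l)%E -> f @ F --> l ->
  exists2 eps : R, 0 < eps & \forall x \near F, (eps%:E < f x)%E.
Proof.
move=> l_gt0 fl.
suff [eps eps_gt0 eps_lt] : exists2 eps : R, 0 < eps & (eps%:E < l)%E.
  by exists eps => //; exact: fl _ (open_ereal_gt' eps_lt).
move: l_gt0 {fl}; case: l => [r r_gt0| _ |//].
- exists (r / 2); first by rewrite divr_gt0.
  by rewrite lte_fin ltr_pdivrMr // ltr_pMr // ?ltr1n // -lte_fin.
- by exists 1 => //; rewrite ltry.
Qed.

Lemma ratio_cvg0_near_le (T : Type) (F : set_system T) {FF : Filter F} (f g : T -> R) :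
  (\forall x \near F, 0 < g x) -> (fun x => f x / g x) @ F --> 0 ->
  \forall x \near F, f x <= g x.
Proof.
move=> g_gt0 fg0; near=> x.
have : `|f x / g x| < 1 by near: x; exact: cvgr0_norm_lt fg0 1 ltr01.
move/(le_lt_trans (ler_norm _))/ltW; rewrite ler_pdivrMr ?mul1r //.
by near: x.
Unshelve. all: by end_near. Qed.

Lemma limn_esup_le_near (u : (\bar R)^nat) (M : \bar R) :
  (\forall n \near \oo, (u n <= M)%E) -> (limn_esup u <= M)%E.
Proof.
move=> uM; apply: (@le_trans _ _ (ereal_sup (u @` [set n | (u n <= M)%E]))).
  by apply: ereal_inf_lbound; exists [set n | (u n <= M)%E].
by apply: ge_ereal_sup => _ [n unM <-].
Qed.

End ExtendedReals.

Section Metric.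
Variables (R : realType) (E : choiceType) (d : E -> E -> R).
Hypothesis d_metric : is_metric d.

Lemma metric_ge0 x y : 0 <= d x y.
Proof.
case: d_metric => d0 dsym dtri; have := dtri x y x.
by rewrite (d0 x x).2 // (dsym y x) -mulr2n pmulrn_lge0.
Qed.

Lemma dball_center x r : 0 < r -> dball d x r x.
Proof. by case: d_metric => d0 _ _; rewrite /dball /= (d0 x x).2. Qed.

End Metric.

Section Graphs.
Variables (R : realType) (E : choiceType).

Lemma gdist_ge0 (mu : E -> E -> R) x y k :
  connects mu k x y -> 0 <= gdist mu x y.
Proof.
move=> ck; apply: lb_le_inf; first by exists k%:R, k.
by move=> _ [j _ <-]; rewrite ler0n.
Qed.

Variables (V : set E) (mu : E -> E -> R) (rho : E).

Lemma le_gmeas (A B : set E) :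
  A `&` V `<=` B `&` V -> (gmeas V mu A <= gmeas V mu B)%E.
Proof. exact: le_esum_subset. Qed.

Lemma gmeas_le_rvol (A : set E) (r : R) :
  (forall x, A x -> V x -> (resist V mu rho x <= r%:E)%E) ->
  (gmeas V mu A <= rvol V mu rho r)%E.
Proof. by move=> Ar; apply: le_gmeas => x [Ax Vx]; split=> //; split=> //; exact: Ar. Qed.

Lemma hinv_le (m r0 v : R) :
  0 < v -> m <= r0 * v ->
  (forall r, r0 < r -> (v%:E <= rvol V mu rho r)%E) ->
  (hinv V mu rho m <= r0%:E)%E.
Proof.
move=> v_gt0 m_le vol_ge; apply: ge_ereal_sup => _ [r [r_ge0 hr] <-].
rewrite lee_fin leNgt; apply/negP => r0r.
have : ((r * v)%:E <= m%:E)%E.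
  by apply: le_trans hr; rewrite EFinM lee_wpmul2l ?lee_fin // vol_ge.
by rewrite lee_fin leNgt (le_lt_trans m_le) // ltr_pM2r.
Qed.

Lemma hinv_le_of_resist (A : set E) (K v m : R) :
  0 < v -> (v%:E <= gmeas V mu A)%E -> m <= K * v ->
  (forall x, A x -> V x -> (resist V mu rho x <= K%:E)%E) ->
  (hinv V mu rho m <= K%:E)%E.
Proof.
move=> v_gt0 vA m_le AK; apply: (hinv_le v_gt0 m_le) => r Kr.
apply: (le_trans vA); apply: gmeas_le_rvol => x Ax Vx.
by apply: le_trans (AK x Ax Vx) _; rewrite lee_fin ltW.
Qed.

Lemma resist_root_ball_le (d : E -> E -> R) (kappa c1 c' al alt : R) :
  is_metric d -> V rho -> 0 <= kappa -> 0 <= c1 -> 0 <= al -> alt <= al ->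
  (forall x, V x -> exists k, connects mu k rho x) ->
  (forall x, V x -> (resist V mu rho x <= (c1 * gdist mu rho x `^ kappa)%:E)%E) ->
  (forall x, V x -> dball d rho 1 x -> gdist mu rho x <= c' * al * d rho x + alt) ->
  forall x, dball d rho 1 x -> V x ->
    (resist V mu rho x <= (c1 * (`|c'| + 1) `^ kappa * al `^ kappa)%:E)%E.
Proof.
move=> d_metric Vrho kappa_ge0 c1_ge0 al_ge0 alt_le conn res_le gdist_le x x1 Vx.
apply: (le_trans (res_le x Vx)); rewrite lee_fin -mulrA -powRM ?addr_ge0 //.
have [k /gdist_ge0 gdist_ge0] := conn x Vx.
apply: ler_wpM2l => //; apply: ge0_ler_powR; rewrite ?nnegrE ?mulr_ge0 ?addr_ge0 //.
have dx_ge0 : 0 <= d rho x by exact: metric_ge0.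
have dx_le1 : d rho x <= 1 by exact: ltW.
apply: (le_trans (gdist_le x Vx x1)); rewrite mulrDl mul1r lerD //.
apply: (le_trans (ler_norm _)); rewrite !normrM (ger0_norm al_ge0) (ger0_norm dx_ge0).
by rewrite -[leRHS]mulr1 ler_wpM2l ?mulr_ge0.
Qed.

Lemma scaled_hinv_le (A : set E) (kappa al be ga eps c2 K b t : R) :
  0 < al -> 0 < be -> 0 <= ga -> 0 < eps -> 0 < c2 -> 0 <= K -> 0 <= b -> t <= b ->
  c2 * ga <= al `^ kappa * be ->
  (eps%:E < (be^-1)%:E * gmeas V mu A)%E ->
  (forall x, A x -> V x -> (resist V mu rho x <= (K * al `^ kappa)%:E)%E) ->
  ((al `^ (- kappa))%:E * hinv V mu rho (ga * t) <= (K + b / (c2 * eps))%:E)%E.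
Proof.
move=> al_gt0 be_gt0 ga_ge0 eps_gt0 c2_gt0 K_ge0 b_ge0 tb scale massA resA.
set M := K + b / (c2 * eps); set p := al `^ kappa.
have p_gt0 : 0 < p by exact: powR_gt0.
have M_ge_K : K <= M by rewrite lerDl divr_ge0 // mulr_ge0 // ltW.
have hinvM : (hinv V mu rho (ga * t) <= (M * p)%:E)%E.
  apply: (hinv_le_of_resist (A := A) (v := be * eps)); first exact: mulr_gt0.
  - by move: massA => /ltW; rewrite lee_pdivlMl // EFinM.
  - have gab : ga * t <= ga * b by exact: ler_wpM2l.
    have gpb : c2 * ga * b <= p * be * b by exact: ler_wpM2r.
    have -> : M * p * (be * eps) = K * p * (be * eps) + p * be * b / c2.
      by rewrite /M; field; rewrite ?mulf_neq0 ?gt_eqF.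
    rewrite -(ler_pM2r c2_gt0) mulrDl divfK ?gt_eqF //.
    have : 0 <= K * p * (be * eps) * c2 by rewrite !mulr_ge0 // ltW.
    by nra.
  - move=> x Ax Vx; apply: (le_trans (resA x Ax Vx)).
    by rewrite lee_fin ler_wpM2r // ltW.
apply: (le_trans (lee_wpmul2l _ hinvM)); first by rewrite lee_fin powR_ge0.
by rewrite -EFinM powRN lee_fin mulrCA mulVf ?gt_eqF // mulr1.
Qed.

End Graphs.

Theorem lemma4p5 (R : realType) (E : pointedType) (d : E -> E -> R)
  (F : set E) (rho : E)
  (nu : {measure set (g_sigma_algebraType (dopen d)) -> \bar R})
  (V : nat -> set E) (mu : nat -> E -> E -> R)
  (alpha beta gamma : nat -> R) (kappa : R) :
  is_metric d ->
  (forall x r, 0 < r -> dcompact d (F `&` dcball d x r)) ->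
  F rho ->
  (* nu is a Radon measure on F (extended by zero to E) with full support *)
  nu (~` F) = 0%E ->
  (forall x, F x -> exists2 r, 0 < r & (nu (dball d x r) < +oo)%E) ->
  (forall A : set (g_sigma_algebraType (dopen d)), measurable A ->
     nu A = ereal_sup [set nu K | K in [set K | dcompact d K /\ K `<=` A `&` F]]) ->
  (forall x r, F x -> 0 < r -> (0 < nu (dball d x r))%E) ->
  (* the graphs G^n *)
  (forall n, wgraph (V n) (mu n) /\ V n rho) ->
  (forall n, 0 <= alpha n) -> alpha @ \oo --> +oo ->
  (forall n, 0 <= beta n) -> beta @ \oo --> +oo ->
  (forall n, 0 <= gamma n) -> gamma @ \oo --> +oo ->
  (* (A5)(i) *)
  (exists2 c, 0 < c & forall n x y, V n x -> V n y ->
      c * alpha n * d x y <= gdist (mu n) x y) ->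
  (exists2 alphat : nat -> R, (forall n, 0 <= alphat n) /\
      (fun n => alphat n / alpha n) @ \oo --> 0 &
    forall r, 0 < r -> exists c' : R, exists n0 : nat, forall n x y, (n0 <= n)%N ->
      V n x -> V n y -> dball d rho r x -> dball d rho r y ->
      gdist (mu n) x y <= c' * alpha n * d x y + alphat n) ->
  (* (A5)(ii) *)
  (forall x r, F x -> 0 < r ->
     (fun n => ((beta n)^-1)%:E * gmeas (V n) (mu n) (dball d x r))%E @ \oo -->
       nu (dball d x r)) ->
  (* (A5)(iii) *)
  0 < kappa ->
  (exists c1 c2 c3 : R, exists n0 : nat, [/\ 0 < c1, 0 < c2, 0 < c3 &
     forall n, (n0 <= n)%N ->
       (forall x y, V n x -> V n y ->
          (resist (V n) (mu n) x y <= (c1 * gdist (mu n) x y `^ kappa)%:E)%E) /\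
       c2 * gamma n <= alpha n `^ kappa * beta n <= c3 * gamma n]) ->
  (* conclusion, for every compact interval I = [a,b] in (0,oo) *)
  forall a b : R, 0 < a -> a <= b ->
  (limn_esup (fun n => ereal_sup
      [set ((alpha n `^ (- kappa))%:E * hinv (V n) (mu n) rho (gamma n * t))%E
        | t in `[a, b]]) < +oo)%E.
Proof.
move=> d_metric _ F_rho _ _ _ nu_pos graphs _ alpha_oo _ beta_oo gamma_ge0 _ _
  [alphat [_ alphat_cvg0] gdist_le] mass_cvg kappa_gt0
  [c1 [c2 [c3 [n0 [c1_gt0 c2_gt0 _ A5iii]]]]] a b a_gt0 ab.
have [c' [n1 gdist_ball_le]] := gdist_le 1 ltr01.
have [eps eps_gt0 mass_ge] :=
  cvge_gt0_near (nu_pos rho 1 F_rho ltr01) (mass_cvg rho 1 F_rho ltr01).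
have alpha_gt0 : \forall n \near \oo, 0 < alpha n by exact: cvgry_gt.
have alphat_le : \forall n \near \oo, alphat n <= alpha n.
  exact: ratio_cvg0_near_le alpha_gt0 alphat_cvg0.
set M := c1 * (`|c'| + 1) `^ kappa + b / (c2 * eps).
apply: (@le_lt_trans _ _ M%:E); last exact: ltry.
apply: limn_esup_le_near; near=> n.
have n0n : (n0 <= n)%N by near: n; exists n0.
have n1n : (n1 <= n)%N by near: n; exists n1.
have [[_ [_ _ _ _ conn]] V_rho] := graphs n.
have [res_le /andP[scale _]] := A5iii n n0n.
have rho_ball : dball d rho 1 rho by exact: dball_center.
apply: ge_ereal_sup => _ [t + <-]; rewrite /= in_itv => /andP[_ tb].
apply: (scaled_hinv_le (A := dball d rho 1) (be := beta n));
  rewrite ?mulr_ge0 ?powR_ge0 ?(ltW c1_gt0) //.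
- by near: n.
- by near: n; exact: cvgry_gt.
- exact: le_trans (ltW a_gt0) ab.
- by near: n.
- apply: (resist_root_ball_le (alt := alphat n));
    rewrite ?(ltW kappa_gt0) ?(ltW c1_gt0) //.
  + by apply: ltW; near: n.
  + by near: n.
  + by move=> x Vx; exact: conn.
  + by move=> x Vx; exact: res_le.
  + by move=> x Vx x1; exact: gdist_ball_le.
Unshelve. all: by end_near. Qed.
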